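(* Let $\mathfrak n=\mathfrak v\oplus\mathfrak z$ be a Lie algebra of Heisenberg type with $\mathfrak z=\mathbb R^m$. Then every Lagrangian subspace $\mathcal L\subset\mathfrak v$ is a $C^+(m)$-submodule of $\mathfrak v$, i.e. $J_zJ_w(\mathcal L)\subset\mathcal L$ for all $z,w\in\mathfrak z$.
   Context: Lie algebra of Heisenberg type: $\mathfrak z=\mathbb R^m$ with standard inner product $\langle\cdot,\cdot\rangle$; $\mathfrak v$ is a finite-dimensional real module over the Clifford algebra $C(m)$ (relations $z^2=-\langle z,z\rangle 1$) with an inner product $(\cdot,\cdot)$ for which each $J_z$ is skew-symmetric; $\mathfrak z$ is central and $\langle z,[u,v]\rangle=(J_zu,v)$ for $u,v\in\mathfrak v$. $C^+(m)$ is the even Clifford subalgebra, generated by products $zw$ of two elements of $\mathbb R^m$. A Lagrangian subspace is a subspace $\mathcal L\subset\mathfrak v$ with $[\mathcal L,\mathcal L]=0$ and $\dim\mathcal L=\frac12\dim\mathfrak v$. *)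

From HB Require Import structures.
From mathcomp Require Import all_boot all_order all_algebra.
From mathcomp Require Import reals.
Set Implicit Arguments. Unset Strict Implicit. Unset Printing Implicit Defensive.
Import Order.TTheory GRing.Theory Num.Theory.
Local Open Scope ring_scope.

(* v = 'rV[R]_n (row vectors), z = 'rV[R]_m with standard inner product.
   J i : 'M_n is J_{e_i}; J_z acts on u : 'rV_n by u |-> u *m J_z. *)
Definition Jz (R : realType) (m n : nat) (J : 'I_m -> 'M[R]_n) (z : 'rV[R]_m)
  : 'M[R]_n := \sum_(i < m) z 0 i *: J i.

Definition zdot (R : realType) (m : nat) (z w : 'rV[R]_m) : R := (z *m w^T) 0 0.

Definition vip (R : realType) (n : nat) (G : 'M[R]_n) (u v : 'rV[R]_n) : R :=
  (u *m G *m v^T) 0 0.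

(* (v, (.,.), J) is a C(m)-module with J_z skew-symmetric: data of an
   H-type Lie algebra n = v (+) z. *)
Definition heisenberg_type (R : realType) (m n : nat) (G : 'M[R]_n)
  (J : 'I_m -> 'M[R]_n) : Prop :=
  [/\ G^T = G,
      (forall u : 'rV[R]_n, u != 0 -> 0 < vip G u u),
      (forall z : 'rV[R]_m, Jz J z *m Jz J z = - (zdot z z) *: 1%:M) &
      (forall (z : 'rV[R]_m) (u v : 'rV[R]_n),
          vip G (u *m Jz J z) v = - vip G u (v *m Jz J z))].

(* the Lie bracket [u,v] in z, determined by <z,[u,v]> = (J_z u, v) *)
Definition hbracket (R : realType) (m n : nat) (G : 'M[R]_n)
  (J : 'I_m -> 'M[R]_n) (u v : 'rV[R]_n) : 'rV[R]_m :=
  \row_(i < m) vip G (u *m J i) v.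

Definition lagrangian (R : realType) (m n : nat) (G : 'M[R]_n)
  (J : 'I_m -> 'M[R]_n) (L : 'M[R]_n) : Prop :=
  (forall u v : 'rV[R]_n, (u <= L)%MS -> (v <= L)%MS -> hbracket G J u v = 0)
  /\ (\rank L).*2 = n.

From HB Require Import structures.
From mathcomp Require Import all_boot all_order all_algebra.
From mathcomp Require Import reals.
Set Implicit Arguments. Unset Strict Implicit. Unset Printing Implicit Defensive.
Import Order.TTheory GRing.Theory Num.Theory.
Local Open Scope ring_scope.

(* Let L^perp be the orthogonal complement of L. Isotropy of L says exactly
   that L J_x is contained in L^perp for every x, and both have dimension
   dim v - dim L = dim L as soon as J_x is invertible, i.e. x != 0; hence
   L J_w = L^perp for w != 0. Then L J_z J_w lies in L^perp J_w = L J_w J_w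
   = -|w|^2 L, which is contained in L. *)

Lemma unitmx_sqr_scalar (F : fieldType) (n : nat) (A : 'M[F]_n) (c : F) :
  A *m A = c *: 1%:M -> c != 0 -> A \in unitmx.
Proof.
move=> sqA c_neq0; have [] := @mulmx1_unit _ _ A (c^-1 *: A) => //.
by rewrite -scalemxAr sqA scalerA mulVf // scale1r.
Qed.

Lemma vip_row (R : realType) (k l n : nat) (G : 'M[R]_n) (A : 'M_(k, n))
    (B : 'M_(l, n)) i j :
  vip G (row i A) (row j B) = (A *m G *m B^T) i j.
Proof. by rewrite /vip -row_mul !mxE; apply: eq_bigr => t _; rewrite !mxE. Qed.

Definition orthmx (R : realType) (n : nat) (G : 'M[R]_n) (L : 'M[R]_n) :=
  kermx (G *m L^T).

Section PositiveDefinite.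

Variables (R : realType) (n : nat) (G : 'M[R]_n).
Hypothesis G_pos : forall u : 'rV[R]_n, u != 0 -> 0 < vip G u u.

Lemma vip_eq0 (u : 'rV[R]_n) : vip G u u = 0 -> u = 0.
Proof. by move=> uu0; apply/eqP/negPn/negP => /G_pos; rewrite uu0 ltxx. Qed.

Lemma posdef_unitmx : G \in unitmx.
Proof.
rewrite -row_free_unit -kermx_eq0; apply/eqP/row_matrixP => i; rewrite row0.
apply: vip_eq0; have /sub_kermxP uG0 := row_sub i (kermx G).
by rewrite /vip uG0 mul0mx mxE.
Qed.

Lemma mxrank_orth (L : 'M[R]_n) : \rank (orthmx G L) = (n - \rank L)%N.
Proof.
rewrite mxrank_ker -mxrank_tr trmx_mul trmxK mxrankMfree //.
by rewrite row_free_unit unitmx_tr posdef_unitmx.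
Qed.

End PositiveDefinite.

Section HeisenbergType.

Variables (R : realType) (m n : nat) (G : 'M[R]_n) (J : 'I_m -> 'M[R]_n).
Hypothesis G_pos : forall u : 'rV[R]_n, u != 0 -> 0 < vip G u u.
Hypothesis Jz_sqr : forall z : 'rV[R]_m, Jz J z *m Jz J z = - zdot z z *: 1%:M.
Hypothesis Jz_skew : forall (z : 'rV[R]_m) (u v : 'rV[R]_n),
  vip G (u *m Jz J z) v = - vip G u (v *m Jz J z).

(* Skew-symmetry gives |u J_x|^2 = -(u, u J_x^2) = |x|^2 |u|^2. *)
Lemma Jz_eq0 (x : 'rV[R]_m) : zdot x x = 0 -> Jz J x = 0.
Proof.
move=> xx0; apply/row_matrixP => i; rewrite row0 rowE.
apply: (vip_eq0 G_pos); rewrite Jz_skew -mulmxA Jz_sqr xx0 oppr0 scale0r.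
by rewrite mulmx0 /vip linear0 mulmx0 mxE oppr0.
Qed.

Lemma Jz_unit (x : 'rV[R]_m) : zdot x x != 0 -> Jz J x \in unitmx.
Proof. by move=> xx_neq0; apply: unitmx_sqr_scalar (Jz_sqr x) _; rewrite oppr_eq0. Qed.

Variable L : 'M[R]_n.
Hypothesis L_isotropic : forall u v : 'rV[R]_n,
  (u <= L)%MS -> (v <= L)%MS -> hbracket G J u v = 0.

Lemma isotropic_mulJ_sub_orth (x : 'rV[R]_m) : (L *m Jz J x <= orthmx G L)%MS.
Proof.
apply/sub_kermxP; rewrite /Jz mulmx_sumr !mulmx_suml big1 // => k _.
rewrite -scalemxAr -!scalemxAl !mulmxA.
suff -> : L *m J k *m G *m L^T = 0 by rewrite scaler0.
apply/matrixP => i j; rewrite -vip_row row_mul mxE.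
have /matrixP/(_ 0 k) := L_isotropic (row_sub i L) (row_sub j L).
by rewrite !mxE.
Qed.

Hypothesis L_half : (\rank L).*2 = n.

Lemma orth_sub_mulJ (x : 'rV[R]_m) :
  zdot x x != 0 -> (orthmx G L <= L *m Jz J x)%MS.
Proof.
move=> xx_neq0; rewrite -(mxrank_leqif_sup (isotropic_mulJ_sub_orth x)).2.
rewrite mxrank_orth // mxrankMfree ?row_free_unit ?Jz_unit //.
by rewrite -[X in (X - _)%N]L_half -addnn addnK.
Qed.

End HeisenbergType.

Theorem corollary4p2 (R : realType) (m n : nat) (G : 'M[R]_n)
  (J : 'I_m -> 'M[R]_n) (L : 'M[R]_n) :
  heisenberg_type G J -> lagrangian G J L ->
  forall z w : 'rV[R]_m, (L *m (Jz J z *m Jz J w) <= L)%MS.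
Proof.
move=> [_ G_pos Jz_sqr Jz_skew] [L_isotropic L_half] z w.
have [zz0|zz_neq0] := eqVneq (zdot z z) 0.
  by rewrite (Jz_eq0 G_pos Jz_sqr Jz_skew zz0) mul0mx mulmx0 sub0mx.
have [ww0|ww_neq0] := eqVneq (zdot w w) 0.
  by rewrite (Jz_eq0 G_pos Jz_sqr Jz_skew ww0) !mulmx0 sub0mx.
have LJz_sub_LJw : (L *m Jz J z <= L *m Jz J w)%MS.
  apply: submx_trans (isotropic_mulJ_sub_orth L_isotropic z) _.
  exact: orth_sub_mulJ.
rewrite mulmxA; apply: submx_trans (submxMr _ LJz_sub_LJw) _.
by rewrite -mulmxA Jz_sqr -scalemxAr mulmx1 scalemx_sub.
Qed.
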